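(* Let $\beta>1$ and $t\in[0,1)$. Then the following are equivalent: (i) $t\in K(t)$; (ii) $t\in E_\beta$; (iii) $t\in\mathcal U$.
   Context: Let $T_\beta\colon[0,1)\to[0,1)$, $T_\beta(x)=\beta x-\lfloor\beta x\rfloor$. For $0<t<1$ let $K(t)=\{x\in[0,1)\colon T_\beta^k(x)\notin(0,t)\text{ for all }k\ge0\}$; set $K(0)=[0,1)$ and $K(1)=\{0\}$. $E_\beta=\{t\in[0,1)\colon K(t')\neq K(t)\text{ for every }t'>t\}$. A parameter $t\in[0,1]$ is a bifurcation parameter if $t\in\{0,1\}$, or $0<t<1$ and for every $\delta>0$ there is $t'\in(t-\delta,t+\delta)$ with $K(t')\neq K(t)$. $\mathcal U$ denotes the set of bifurcation parameters in $[0,1)$. *)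

From Stdlib Require Import Reals.
Open Scope R_scope.

Definition Rfloor (r : R) : R := IZR (Int_part r).

Definition Tb (beta x : R) : R := beta * x - Rfloor (beta * x).

Definition Tbk (beta : R) (k : nat) (x : R) : R := Nat.iter k (Tb beta) x.

Definition K (beta t x : R) : Prop :=
  if Req_EM_T t 0 then 0 <= x < 1
  else if Req_EM_T t 1 then x = 0
  else 0 <= x < 1 /\ forall k : nat, ~ (0 < Tbk beta k x < t).

Definition Kneq (beta t t' : R) : Prop := ~ (forall x, K beta t x <-> K beta t' x).

Definition E (beta t : R) : Prop :=
  0 <= t < 1 /\ forall t', t < t' <= 1 -> Kneq beta t' t.

Definition bifurcation (beta t : R) : Prop :=
  0 <= t <= 1 /\
  (t = 0 \/ t = 1 \/
   (0 < t < 1 /\ forall delta, 0 < delta ->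
      exists t', 0 <= t' <= 1 /\ t - delta < t' < t + delta /\ Kneq beta t' t)).

Definition U (beta t : R) : Prop := 0 <= t < 1 /\ bifurcation beta t.

(* The implication t in K(t) => t in E_beta holds because t itself is in K(t)
   but not in K(t') for t' > t, and a parameter of E_beta is clearly a
   bifurcation parameter.  Conversely, if t is not in K(t), some iterate
   y = T^k t lies in (0, t).  Since y <> 0, no earlier iterate hits a
   discontinuity of T, so T^k is continuous at t and maps a whole window
   (t - d, t + d) into (0, t - d].  An orbit entering [t1, t2) inside this
   window is thus sent by T^k into (0, t1), so K(t1) = K(t2) for all t1, t2 in
   the window, and t is not a bifurcation parameter.  Nothing here uses
   beta > 1. *)

From Stdlib Require Import Reals.
From Stdlib Require Import Lra Classical.
Open Scope R_scope.

Lemma Rfloor_eq (z : Z) (r : R) : IZR z <= r < IZR z + 1 -> Rfloor r = IZR z.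
Proof.
  intros Hr. unfold Rfloor. f_equal. symmetry. apply Int_part_spec. lra.
Qed.

Lemma Rfloor_continuity_pt (z : R) : Rfloor z <> z -> continuity_pt Rfloor z.
Proof.
  intros Hz. destruct (base_Int_part z) as [Hlo Hhi].
  set (m := Int_part z) in *.
  assert (Hm : IZR m < z) by (unfold Rfloor in Hz; fold m in Hz; lra).
  apply (continuity_pt_locally_ext (fun _ => IZR m) Rfloor
           (Rmin (z - IZR m) (IZR m + 1 - z))).
  - apply Rmin_pos; lra.
  - intros y Hy. unfold Rdist in Hy. apply Rabs_def2 in Hy.
    assert (M1 := Rmin_l (z - IZR m) (IZR m + 1 - z)).
    assert (M2 := Rmin_r (z - IZR m) (IZR m + 1 - z)).
    symmetry. apply Rfloor_eq. lra.
  - apply continuity_pt_const. intros ? ?. reflexivity.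
Qed.

Lemma Tb_0 (beta : R) : Tb beta 0 = 0.
Proof.
  unfold Tb. rewrite Rmult_0_r, (Rfloor_eq 0 0); lra.
Qed.

Lemma Tb_continuity_pt (beta y : R) : Tb beta y <> 0 -> continuity_pt (Tb beta) y.
Proof.
  intros Hy.
  change (continuity_pt (comp (fun z => z - Rfloor z) (Rmult beta)) y).
  apply continuity_pt_comp.
  - change (continuity_pt (mult_real_fct beta id) y).
    apply continuity_pt_scal, derivable_continuous_pt, derivable_pt_id.
  - apply continuity_pt_minus; [apply derivable_continuous_pt, derivable_pt_id|].
    apply Rfloor_continuity_pt. unfold Tb in Hy. lra.
Qed.

Lemma Tbk_continuity_pt (beta : R) (n : nat) (x : R) :
  Tbk beta n x <> 0 -> continuity_pt (Tbk beta n) x.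
Proof.
  induction n as [|n IH]; intros Hx.
  - apply derivable_continuous_pt, derivable_pt_id.
  - change (continuity_pt (comp (Tb beta) (Tbk beta n)) x).
    change (Tb beta (Tbk beta n x) <> 0) in Hx.
    apply continuity_pt_comp; [|exact (Tb_continuity_pt _ _ Hx)].
    apply IH. intros H0. rewrite H0, Tb_0 in Hx. lra.
Qed.

Lemma continuity_pt_ball (f : R -> R) (x eps : R) :
  continuity_pt f x -> 0 < eps ->
  exists d, 0 < d /\ forall s, Rabs (s - x) < d -> Rabs (f s - f x) < eps.
Proof.
  intros Hf Heps. destruct (Hf eps Heps) as [d [Hd Hball]].
  exists d. split; [exact Hd|]. intros s Hs.
  destruct (Req_dec s x) as [->|Hsx].
  - rewrite Rminus_diag, Rabs_R0. exact Heps.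
  - exact (Hball s (conj (conj I (not_eq_sym Hsx)) Hs)).
Qed.

Lemma Tbk_add (beta : R) (k j : nat) (x : R) :
  Tbk beta k (Tbk beta j x) = Tbk beta (k + j) x.
Proof. unfold Tbk. rewrite Nat.iter_add. reflexivity. Qed.

Definition avoids (beta t x : R) : Prop := forall k : nat, ~ (0 < Tbk beta k x < t).

Lemma avoids_le (beta t1 t2 x : R) : t1 <= t2 -> avoids beta t2 x -> avoids beta t1 x.
Proof. intros Ht Hx k Hk. apply (Hx k). lra. Qed.

Lemma K_0 (beta x : R) : K beta 0 x <-> 0 <= x < 1.
Proof. unfold K. destruct (Req_EM_T 0 0); [tauto|congruence]. Qed.

Lemma K_interior (beta t x : R) : 0 < t < 1 ->
  (K beta t x <-> 0 <= x < 1 /\ avoids beta t x).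
Proof.
  intros Ht. unfold K, avoids.
  destruct (Req_EM_T t 0); [lra|]. destruct (Req_EM_T t 1); [lra|]. tauto.
Qed.

Lemma K_notin (beta t x : R) : 0 < x < t -> t <= 1 -> ~ K beta t x.
Proof.
  intros Hx Ht. unfold K.
  destruct (Req_EM_T t 0); [lra|]. destruct (Req_EM_T t 1); [lra|].
  intros [_ Havoid]. apply (Havoid 0%nat). exact Hx.
Qed.

Lemma E_of_K (beta t : R) : 0 <= t < 1 -> K beta t t -> E beta t.
Proof.
  intros Ht HK. split; [exact Ht|]. intros t' Ht' Heq.
  destruct (Req_dec t 0) as [->|Ht0].
  - apply (K_notin beta t' (t' / 2)); [lra|lra|]. apply Heq, K_0. lra.
  - apply (K_notin beta t' t); [lra|lra|]. apply Heq, HK.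
Qed.

Lemma U_of_E (beta t : R) : E beta t -> U beta t.
Proof.
  intros [Ht HE]. split; [exact Ht|]. split; [lra|].
  destruct (Req_dec t 0) as [->|Ht0]; [left; reflexivity|].
  right; right. split; [lra|]. intros delta Hd.
  assert (M1 := Rmin_l (t + delta / 2) 1). assert (M2 := Rmin_r (t + delta / 2) 1).
  set (t' := Rmin (t + delta / 2) 1) in *.
  assert (Htt' : t < t') by (apply Rmin_glb_lt; lra).
  exists t'. split; [lra|]. split; [lra|]. apply HE. lra.
Qed.

Lemma avoids_window (beta a b t1 t2 x : R) (k : nat) :
  (forall s, a < s < b -> 0 < Tbk beta k s <= a) ->
  a < t1 <= t2 -> t2 <= b -> avoids beta t1 x -> avoids beta t2 x.
Proof.
  intros Hwin Ht1 Ht2 Hx j Hj.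
  destruct (Rlt_le_dec (Tbk beta j x) t1) as [Hlt|Hge].
  - apply (Hx j). lra.
  - assert (Hk := Hwin (Tbk beta j x) ltac:(lra)).
    rewrite Tbk_add in Hk. apply (Hx (k + j)%nat). lra.
Qed.

Lemma K_const_on_window (beta a b t1 t2 : R) (k : nat) :
  0 < a -> b <= 1 ->
  (forall s, a < s < b -> 0 < Tbk beta k s <= a) ->
  a < t1 < b -> a < t2 < b -> forall x, K beta t1 x <-> K beta t2 x.
Proof.
  intros Ha Hb Hwin Ht1 Ht2 x.
  rewrite (K_interior beta t1 x), (K_interior beta t2 x) by lra.
  destruct (Rle_lt_dec t1 t2) as [Hle|Hgt].
  - split; intros [Hx Hav]; split; try exact Hx.
    + apply (avoids_window beta a b t1 t2 x k); [exact Hwin|lra|lra|exact Hav].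
    + exact (avoids_le beta t1 t2 x Hle Hav).
  - split; intros [Hx Hav]; split; try exact Hx.
    + apply (avoids_le beta t2 t1 x); [lra|exact Hav].
    + apply (avoids_window beta a b t2 t1 x k); [exact Hwin|lra|lra|exact Hav].
Qed.

Lemma orbit_window (beta t : R) (k : nat) :
  0 < Tbk beta k t < t -> t < 1 ->
  exists d, 0 < d < t /\ t + d <= 1 /\
    forall s, t - d < s < t + d -> 0 < Tbk beta k s <= t - d.
Proof.
  intros Hy Ht. set (y := Tbk beta k t) in *.
  assert (Hy0 : y <> 0) by lra.
  destruct (continuity_pt_ball (Tbk beta k) t (Rmin y (t - y) / 2)
              (Tbk_continuity_pt beta k t Hy0))
    as [d0 [Hd0 Hball]].
  { apply Rdiv_lt_0_compat; [apply Rmin_pos|]; lra. }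
  assert (D0 := Rmin_l d0 (Rmin ((t - y) / 2) (1 - t))).
  assert (D1 := Rmin_r d0 (Rmin ((t - y) / 2) (1 - t))).
  assert (D2 := Rmin_l ((t - y) / 2) (1 - t)).
  assert (D3 := Rmin_r ((t - y) / 2) (1 - t)).
  assert (Y1 := Rmin_l y (t - y)). assert (Y2 := Rmin_r y (t - y)).
  set (d := Rmin d0 (Rmin ((t - y) / 2) (1 - t))) in *.
  assert (Hd : 0 < d) by (repeat apply Rmin_pos; lra).
  exists d. split; [lra|]. split; [lra|]. intros s Hs.
  assert (Hs' : Rabs (s - t) < d0) by (apply Rabs_def1; lra).
  apply Hball, Rabs_def2 in Hs'. fold y in Hs'. lra.
Qed.

Lemma K_of_U (beta t : R) : U beta t -> K beta t t.
Proof.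
  intros [Ht [_ Hbif]].
  destruct Hbif as [->|[Ht1|[Ht01 Hbif]]]; [apply K_0; lra|lra|].
  apply NNPP. intros HnK.
  assert (Hk : exists k, 0 < Tbk beta k t < t).
  { apply not_all_not_ex. intros Hall.
    apply HnK, K_interior; [lra|]. split; [lra|exact Hall]. }
  destruct Hk as [k Hk].
  destruct (orbit_window beta t k Hk ltac:(lra)) as [d [Hd [Hd1 Hwin]]].
  destruct (Hbif d ltac:(lra)) as [t' [_ [Ht' Hneq]]].
  apply Hneq, (K_const_on_window beta (t - d) (t + d) t' t k);
    [lra|lra|exact Hwin|lra|lra].
Qed.

Theorem mainTheorem3 (beta t : R) (Hbeta : 1 < beta) (Ht : 0 <= t < 1) :
  (K beta t t <-> E beta t) /\ (E beta t <-> U beta t).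
Proof.
  assert (HKE := E_of_K beta t Ht).
  assert (HEU := U_of_E beta t).
  assert (HUK := K_of_U beta t).
  tauto.
Qed.
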